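(* Let $(N,g)$ be a simply connected five-dimensional two-step nilpotent Lie group with a left-invariant Riemannian metric, with Lie algebra $\mathfrak{n}$ and orthonormal basis $e_1,\dots,e_5$ as in one of the three normal forms below, and let $\mathfrak{h}$ be the center of $\mathfrak{n}$. A left-invariant vector field $X\in\mathfrak{n}$ is harmonic if and only if: (a) $X\in\mathfrak{h}^\perp$, in the cases where $\dim\mathfrak{h}$ is $1$ or $2$ (Cases 1 and 2); (b) $\langle X,e_3\rangle=0$, in the case where $\dim\mathfrak{h}=3$ (Case 3).
   Context: A Lie algebra $\mathfrak{n}$ is two-step nilpotent if $[\mathfrak{n},\mathfrak{n}]\neq 0$ and $[\mathfrak{n},[\mathfrak{n},\mathfrak{n}]]=0$. Left-invariant vector fields are identified with elements of $\mathfrak{n}=T_eN$, and $g$ with an inner product $\langle\cdot,\cdot\rangle$ on $\mathfrak{n}$. Up to isometry, such $(\mathfrak{n},\langle\cdot,\cdot\rangle)$ admits an orthonormal basis $e_1,\dots,e_5$ with one of the following bracket structures (all brackets not listed being zero): (Case 1, center of dimension 1) $[e_1,e_2]=\lambda e_5$, $[e_3,e_4]=\mu e_5$ with $\lambda\ge\mu>0$; (Case 2, center of dimension 2) $[e_1,e_2]=\lambda e_4$, $[e_1,e_3]=\mu e_5$ with $\lambda\ge\mu>0$; (Case 3, center of dimension 3) $[e_1,e_2]=\lambda e_3$ with $\lambda>0$. A vector field $X$ is harmonic if its metric dual 1-form $X^\flat=g(X,\cdot)$ satisfies $\Delta X^\flat=0$, where $\Delta=d\circ\delta+\delta\circ d$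 is the Laplace–Beltrami operator on forms, $d$ is the exterior derivative and $\delta=-\mathrm{div}$ is the codifferential. *)

(* Everything is left-invariant, hence determined at the identity: we work on
   the Lie algebra n = R^5 with orthonormal basis e_1..e_5, encoded as the
   coordinate indices 0..4 of a vector  v : nat -> R  (coordinates >= 5 are
   never used). *)
From Stdlib Require Import Reals Lra Lia.
Open Scope R_scope.

Definition vec := nat -> R.

(* structure constants: [e_i, e_j] = sum_k c i j k e_k  (0-based indices) *)
Definition sconst := nat -> nat -> nat -> R.

Definition sum5 (f : nat -> R) : R := sum_f_R0 f 4.

(* the orthonormal basis vector e_(i+1) *)
Definition ebasis (i : nat) : vec := fun k => if Nat.eqb k i then 1 else 0.

Definition ip (x y : vec) : R := sum5 (fun i => x i * y i).

Definition br (c : sconst) (x y : vec) : vec :=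
  fun k => sum5 (fun i => sum5 (fun j => x i * y j * c i j k)).

Definition vadd (x y : vec) : vec := fun k => x k + y k.

Definition vzero (v : vec) : Prop := forall k, (k < 5)%nat -> v k = 0.

(* Levi-Civita connection on left-invariant fields (Koszul formula):
   <nabla_X Y, Z> = 1/2 (<[X,Y],Z> - <[Y,Z],X> + <[Z,X],Y>) *)
Definition nabla (c : sconst) (x y : vec) : vec :=
  fun k => / 2 * (ip (br c x y) (ebasis k) - ip (br c y (ebasis k)) x
                  + ip (br c (ebasis k) x) y).

(* left-invariant 0-, 1-, 2-forms: constants, and (multi)linear maps on n *)
Definition form1 := vec -> R.
Definition form2 := vec -> vec -> R.

Definition flat (x : vec) : form1 := fun y => ip x y.

(* exterior derivative of a left-invariant 1-form:
   d w (Y,Z) = Y(w Z) - Z(w Y) - w([Y,Z]) = - w([Y,Z]) *)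
Definition d1 (c : sconst) (w : form1) : form2 := fun y z => - w (br c y z).

(* exterior derivative of a left-invariant (i.e. constant) function is 0 *)
Definition d0 (f : R) : form1 := fun _ => 0.

(* codifferential of a 1-form: delta w = - sum_i (nabla_{e_i} w)(e_i),
   with (nabla_Y w)(Z) = Y(w Z) - w(nabla_Y Z) = - w(nabla_Y Z) *)
Definition delta1 (c : sconst) (w : form1) : R :=
  - sum5 (fun i => - w (nabla c (ebasis i) (ebasis i))).

(* codifferential of a 2-form: (delta b)(X) = - sum_i (nabla_{e_i} b)(e_i, X),
   with (nabla_Y b)(Z,W) = - b(nabla_Y Z, W) - b(Z, nabla_Y W) *)
Definition delta2 (c : sconst) (b : form2) : form1 := fun x =>
  - sum5 (fun i => - b (nabla c (ebasis i) (ebasis i)) x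
                   - b (ebasis i) (nabla c (ebasis i) x)).

Definition laplace1 (c : sconst) (w : form1) : form1 :=
  fun x => d0 (delta1 c w) x + delta2 c (d1 c w) x.

Definition harmonic (c : sconst) (x : vec) : Prop :=
  forall y : vec, laplace1 c (flat x) y = 0.

Definition in_center (c : sconst) (z : vec) : Prop :=
  forall y : vec, vzero (br c z y).
Definition perp_center (c : sconst) (x : vec) : Prop :=
  forall z : vec, in_center c z -> ip x z = 0.

(* Normal forms (0-based indices: e_1 = 0, ..., e_5 = 4) *)
(* Case 1: [e1,e2] = lam e5, [e3,e4] = mu e5 *)
Definition case1 (lam mu : R) : sconst := fun i j k =>
  match i, j, k with
  | O, 1%nat, 4%nat => lam | 1%nat, 0%nat, 4%nat => - lam
  | 2%nat, 3%nat, 4%nat => mu  | 3%nat, 2%nat, 4%nat => - mu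
  | _, _, _ => 0%R end.

(* Case 2: [e1,e2] = lam e4, [e1,e3] = mu e5 *)
Definition case2 (lam mu : R) : sconst := fun i j k =>
  match i, j, k with
  | O, 1%nat, 3%nat => lam | 1%nat, 0%nat, 3%nat => - lam
  | O, 2%nat, 4%nat => mu  | 2%nat, 0%nat, 4%nat => - mu
  | _, _, _ => 0%R end.

(* Case 3: [e1,e2] = lam e3 *)
Definition case3 (lam : R) : sconst := fun i j k =>
  match i, j, k with
  | O, 1%nat, 2%nat => lam | 1%nat, 0%nat, 2%nat => - lam
  | _, _, _ => 0%R end.

(* In each of the three normal forms the Laplacian of a
   left-invariant 1-form is diagonal in the orthonormal basis e_1..e_5:
     (Delta X^flat)(Y) = sum_k a_k X_k Y_k,
   with a_k > 0 exactly for the basis vectors spanning the derived algebra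
   [n,n] (a_5 = lam^2 + mu^2 in Case 1; a_4 = lam^2, a_5 = mu^2 in Case 2;
   a_3 = lam^2 in Case 3) and a_k = 0 otherwise.  Hence X is harmonic iff
   X vanishes on the coordinates of [n,n] (lemma [harmonic_support]).  In
   Cases 1 and 2 the center h is spanned by exactly those basis vectors, so
   X is orthogonal to h iff it vanishes on the same coordinates (lemma
   [perp_center_support]); in Case 3 the condition reads <X, e_3> = 0.
   The file first proves these two general criteria, then computes the
   bracket, Laplacian and center of each normal form, and finally combines
   them. *)
From Pilot Require Import Defs.
From Stdlib Require Import Reals Lra Lia FunctionalExtensionality.
Open Scope R_scope.

Lemma sum5_eq0 (f : nat -> R) :
  (forall k, (k < 5)%nat -> f k = 0) -> sum5 f = 0.
Proof.
  intros Hf; unfold sum5; simpl.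
  rewrite !Hf by lia; ring.
Qed.

Lemma sum5_ebasis (f : nat -> R) (i : nat) :
  (i < 5)%nat -> sum5 (fun k => f k * ebasis i k) = f i.
Proof.
  intros Hi; unfold sum5, ebasis.
  destruct i as [|[|[|[|[|i]]]]]; simpl; try ring; lia.
Qed.

Lemma ip_ebasis (x : vec) (i : nat) : (i < 5)%nat -> ip x (ebasis i) = x i.
Proof. exact (sum5_ebasis x i). Qed.

Definition vanishes_on (s : nat -> bool) (x : vec) : Prop :=
  forall k, (k < 5)%nat -> s k = true -> x k = 0.

Lemma vanishes_on_single (i : nat) (x : vec) :
  (i < 5)%nat -> vanishes_on (fun k => Nat.eqb k i) x <-> x i = 0.
Proof.
  intros Hi; split.
  - intros Hx; apply Hx; [exact Hi | apply Nat.eqb_refl].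
  - intros Hxi k _ Hk; apply Nat.eqb_eq in Hk; subst k; exact Hxi.
Qed.

Definition diagonal_laplacian (c : sconst) (a : nat -> R) : Prop :=
  forall X y : vec, laplace1 c (flat X) y = sum5 (fun k => a k * X k * y k).

Lemma harmonic_support (c : sconst) (a : nat -> R) (s : nat -> bool) (X : vec) :
  diagonal_laplacian c a ->
  (forall k, (k < 5)%nat -> a k <> 0 <-> s k = true) ->
  harmonic c X <-> vanishes_on s X.
Proof.
  intros Hlap Hs; unfold harmonic; split.
  - intros Hharm k Hk Hsk.
    assert (Hak : a k * X k = 0).
    { specialize (Hharm (ebasis k)); rewrite Hlap in Hharm.
      rewrite (sum5_ebasis (fun j => a j * X j) k Hk) in Hharm; exact Hharm. }
    destruct (Rmult_integral _ _ Hak) as [Ha | Hx]; [|exact Hx].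
    exfalso; apply (proj2 (Hs k Hk) Hsk); exact Ha.
  - intros Hvan y; rewrite Hlap; apply sum5_eq0; intros k Hk.
    destruct (s k) eqn:Hsk.
    + rewrite (Hvan k Hk Hsk); ring.
    + destruct (Req_dec (a k) 0) as [Ha | Ha].
      * rewrite Ha; ring.
      * apply (Hs k Hk) in Ha; congruence.
Qed.

Definition center_spanned_by (c : sconst) (s : nat -> bool) : Prop :=
  (forall z, in_center c z -> forall k, (k < 5)%nat -> s k = false -> z k = 0) /\
  (forall k, (k < 5)%nat -> s k = true -> in_center c (ebasis k)).

Lemma perp_center_support (c : sconst) (s : nat -> bool) (X : vec) :
  center_spanned_by c s -> perp_center c X <-> vanishes_on s X.
Proof.
  intros [Hcenter Hbasis]; unfold perp_center; split.
  - intros Hperp k Hk Hsk.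
    rewrite <- (ip_ebasis X k Hk); apply Hperp, Hbasis; assumption.
  - intros Hvan z Hz; apply sum5_eq0; intros k Hk.
    destruct (s k) eqn:Hsk.
    + rewrite (Hvan k Hk Hsk); ring.
    + rewrite (Hcenter z Hz k Hk Hsk); ring.
Qed.

Section Case1.
Variables lam mu : R.

Definition br_case1 (x y : vec) : vec := fun k =>
  match k with
  | 4%nat => lam * (x 0%nat * y 1%nat - x 1%nat * y 0%nat)
             + mu * (x 2%nat * y 3%nat - x 3%nat * y 2%nat)
  | _ => 0
  end.

Lemma br_case1E : br (case1 lam mu) = br_case1.
Proof.
  extensionality x; extensionality y; extensionality k.
  destruct k as [|[|[|[|[|k]]]]]; unfold br, sum5, case1, br_case1; simpl; ring.
Qed.

(* e_5 spans both [n,n] and the center. *)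
Definition support_case1 (k : nat) : bool := Nat.eqb k 4.

Lemma laplacian_case1 :
  diagonal_laplacian (case1 lam mu)
    (fun k => if support_case1 k then lam ^ 2 + mu ^ 2 else 0).
Proof.
  intros X y.
  unfold laplace1, d0, delta2, Defs.d1, flat, nabla; rewrite br_case1E.
  unfold br_case1, ip, sum5, ebasis, support_case1; simpl; field.
Qed.

Lemma harmonic_case1 (X : vec) :
  mu > 0 -> harmonic (case1 lam mu) X <-> vanishes_on support_case1 X.
Proof.
  intros Hmu; apply (harmonic_support _ _ _ X laplacian_case1).
  intros k Hk; unfold support_case1.
  destruct k as [|[|[|[|[|k]]]]]; simpl; try lia;
    split; intros H; solve [congruence | exfalso; now apply H | nra].
Qed.

(* A central vector commutes with e_1..e_4, which forces its first four
   coordinates to vanish; e_5 is central. *)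
Lemma center_case1 :
  lam <> 0 -> mu <> 0 -> center_spanned_by (case1 lam mu) support_case1.
Proof.
  intros Hlam Hmu; split.
  - intros z Hz.
    assert (Hbr : forall j, br_case1 z (ebasis j) 4%nat = 0).
    { intros j; rewrite <- br_case1E; apply Hz; lia. }
    pose proof (Hbr 0%nat) as H0; pose proof (Hbr 1%nat) as H1;
      pose proof (Hbr 2%nat) as H2; pose proof (Hbr 3%nat) as H3.
    unfold br_case1, ebasis in H0, H1, H2, H3; simpl in H0, H1, H2, H3.
    intros k Hk Hsk; unfold support_case1 in Hsk.
    destruct k as [|[|[|[|[|k]]]]]; simpl in Hsk; try discriminate; try lia;
      [apply (Rmult_eq_reg_l lam) | apply (Rmult_eq_reg_l lam)
      | apply (Rmult_eq_reg_l mu) | apply (Rmult_eq_reg_l mu)]; lra.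
  - intros k Hk Hsk y j _; unfold support_case1 in Hsk.
    apply Nat.eqb_eq in Hsk; subst k.
    rewrite br_case1E; unfold br_case1, ebasis.
    destruct j as [|[|[|[|[|j]]]]]; simpl; ring.
Qed.

End Case1.

Section Case2.
Variables lam mu : R.

Definition br_case2 (x y : vec) : vec := fun k =>
  match k with
  | 3%nat => lam * (x 0%nat * y 1%nat - x 1%nat * y 0%nat)
  | 4%nat => mu * (x 0%nat * y 2%nat - x 2%nat * y 0%nat)
  | _ => 0
  end.

Lemma br_case2E : br (case2 lam mu) = br_case2.
Proof.
  extensionality x; extensionality y; extensionality k.
  destruct k as [|[|[|[|[|k]]]]]; unfold br, sum5, case2, br_case2; simpl; ring.
Qed.

(* e_4 and e_5 span both [n,n] and the center. *)
Definition support_case2 (k : nat) : bool := Nat.eqb k 3 || Nat.eqb k 4.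

Lemma laplacian_case2 :
  diagonal_laplacian (case2 lam mu)
    (fun k => match k with 3%nat => lam ^ 2 | 4%nat => mu ^ 2 | _ => 0 end).
Proof.
  intros X y.
  unfold laplace1, d0, delta2, Defs.d1, flat, nabla; rewrite br_case2E.
  unfold br_case2, ip, sum5, ebasis; simpl; field.
Qed.

Lemma harmonic_case2 (X : vec) :
  lam <> 0 -> mu <> 0 -> harmonic (case2 lam mu) X <-> vanishes_on support_case2 X.
Proof.
  intros Hlam Hmu; apply (harmonic_support _ _ _ X laplacian_case2).
  intros k Hk; unfold support_case2.
  destruct k as [|[|[|[|[|k]]]]]; cbn -[pow]; try lia;
    split; intros H; solve [congruence | exfalso; now apply H | now apply pow_nonzero].
Qed.

(* Bracketing a central vector with e_1 and e_2 kills its first three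
   coordinates; e_4 and e_5 are central. *)
Lemma center_case2 :
  lam <> 0 -> mu <> 0 -> center_spanned_by (case2 lam mu) support_case2.
Proof.
  intros Hlam Hmu; split.
  - intros z Hz.
    assert (Hbr : forall j k, (k < 5)%nat -> br_case2 z (ebasis j) k = 0).
    { intros j k Hk; rewrite <- br_case2E; apply Hz; exact Hk. }
    pose proof (Hbr 0%nat 3%nat ltac:(lia)) as H03;
      pose proof (Hbr 0%nat 4%nat ltac:(lia)) as H04;
      pose proof (Hbr 1%nat 3%nat ltac:(lia)) as H13.
    unfold br_case2, ebasis in H03, H04, H13; simpl in H03, H04, H13.
    intros k Hk Hsk; unfold support_case2 in Hsk.
    destruct k as [|[|[|[|[|k]]]]]; simpl in Hsk; try discriminate; try lia;
      [apply (Rmult_eq_reg_l lam) | apply (Rmult_eq_reg_l lam)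
      | apply (Rmult_eq_reg_l mu)]; lra.
  - intros k Hk Hsk y j _; unfold support_case2 in Hsk.
    rewrite br_case2E; unfold br_case2, ebasis.
    destruct k as [|[|[|[|[|k]]]]]; simpl in Hsk; try discriminate; try lia;
      destruct j as [|[|[|[|[|j]]]]]; simpl; ring.
Qed.

End Case2.

Section Case3.
Variable lam : R.

Definition br_case3 (x y : vec) : vec := fun k =>
  match k with
  | 2%nat => lam * (x 0%nat * y 1%nat - x 1%nat * y 0%nat)
  | _ => 0
  end.

Lemma br_case3E : br (case3 lam) = br_case3.
Proof.
  extensionality x; extensionality y; extensionality k.
  destruct k as [|[|[|[|[|k]]]]]; unfold br, sum5, case3, br_case3; simpl; ring.
Qed.

Lemma laplacian_case3 :
  diagonal_laplacian (case3 lam)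
    (fun k => if Nat.eqb k 2 then lam ^ 2 else 0).
Proof.
  intros X y.
  unfold laplace1, d0, delta2, Defs.d1, flat, nabla; rewrite br_case3E.
  unfold br_case3, ip, sum5, ebasis; simpl; field.
Qed.

(* Here the weight sits on e_3, which spans [n,n] but not the center. *)
Lemma harmonic_case3 (X : vec) :
  lam <> 0 -> harmonic (case3 lam) X <-> ip X (ebasis 2) = 0.
Proof.
  intros Hlam.
  rewrite (harmonic_support _ _ (fun k => Nat.eqb k 2) X laplacian_case3).
  - rewrite ip_ebasis by lia; apply vanishes_on_single; lia.
  - intros k Hk.
    destruct k as [|[|[|[|[|k]]]]]; cbn -[pow]; try lia;
      split; intros H; solve [congruence | exfalso; now apply H | now apply pow_nonzero].
Qed.

End Case3.

Theorem mainTheorem5 (lam mu : R) :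
  (lam >= mu -> mu > 0 ->
     forall X : vec, harmonic (case1 lam mu) X <-> perp_center (case1 lam mu) X) /\
  (lam >= mu -> mu > 0 ->
     forall X : vec, harmonic (case2 lam mu) X <-> perp_center (case2 lam mu) X) /\
  (lam > 0 ->
     forall X : vec, harmonic (case3 lam) X <-> ip X (ebasis 2) = 0).
Proof.
  split; [|split].
  - intros Hlm Hmu X.
    rewrite (harmonic_case1 lam mu X Hmu).
    rewrite (perp_center_support _ _ X (center_case1 lam mu ltac:(lra) ltac:(lra))).
    reflexivity.
  - intros Hlm Hmu X.
    rewrite (harmonic_case2 lam mu X ltac:(lra) ltac:(lra)).
    rewrite (perp_center_support _ _ X (center_case2 lam mu ltac:(lra) ltac:(lra))).
    reflexivity.
  - intros Hlam X; apply harmonic_case3; lra.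
Qed.
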